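(* For every $n\in\mathbb{N}$, $\mathrm{C}_{\{0,\ldots,n\}}<_{sW}\mathrm{C}_{\sharp=n+1}$.
   Context: Represented spaces carry partial surjections $\delta:\subseteq\mathbb{N}^\mathbb{N}\to X$; a realizer $F$ of $f$ satisfies $\delta_YF(p)\in f(\delta_X(p))$ for $p\in\operatorname{dom}(f\delta_X)$. $f\leq_{sW}g$ iff there are computable partial $K,H$ on Baire space with $KGH$ realizing $f$ for every realizer $G$ of $g$; $f<_{sW}g$ means $f\leq_{sW}g$ and $g\not\leq_{sW}f$. $\mathrm{C}_{\{0,\ldots,n\}}$ is closed choice on the discrete space $\{0,\ldots,n\}$: given a non-empty subset via an enumeration of its complement, output an element. Closed subsets of Cantor space are named by binary trees (set of infinite paths); $\mathrm{C}_{\sharp=m}$ is the restriction of $\mathrm{C}_{\{0,1\}^\mathbb{N}}$ (output any point of the given non-empty closed set) to trees having exactly $m$ vertices at each level $k$ with $2^k\geq m$ and in which, from some finite depth on, every vertex has exactly one child. *)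

From mathcomp Require Import all_boot.

Set Implicit Arguments.
Unset Strict Implicit.
Unset Printing Implicit Defensive.

Definition baire := nat -> nat.

Inductive rprog : Type :=
| rZero : rprog
| rSucc : rprog
| rProj : nat -> rprog
| rComp : rprog -> seq rprog -> rprog
| rPrim : rprog -> rprog -> rprog
| rMin  : rprog -> rprog.

Inductive evalR : rprog -> seq nat -> nat -> Prop :=
| ev_zero xs : evalR rZero xs 0
| ev_succ x xs : evalR rSucc (x :: xs) x.+1
| ev_proj i xs : i < size xs -> evalR (rProj i) xs (nth 0 xs i)
| ev_comp f gs xs ys z :
    evalL gs xs ys -> evalR f ys z -> evalR (rComp f gs) xs z
| ev_prim0 f g xs y : evalR f xs y -> evalR (rPrim f g) (0 :: xs) y
| ev_primS f g n xs r y :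
    evalR (rPrim f g) (n :: xs) r -> evalR g (n :: r :: xs) y ->
    evalR (rPrim f g) (n.+1 :: xs) y
| ev_min f xs n :
    evalR f (n :: xs) 0 ->
    (forall m, m < n -> exists k, evalR f (m :: xs) k.+1) ->
    evalR (rMin f) xs n
with evalL : seq rprog -> seq nat -> seq nat -> Prop :=
| evL_nil xs : evalL [::] xs [::]
| evL_cons g gs xs y ys :
    evalR g xs y -> evalL gs xs ys -> evalL (g :: gs) xs (y :: ys).

Definition cpair (n m : nat) : nat := ((n + m) * (n + m).+1) %/ 2 + m.
Fixpoint code_seq (s : seq nat) : nat :=
  if s is x :: s' then (cpair x (code_seq s')).+1 else 0.

Definition prefix (p : baire) (k : nat) : seq nat := mkseq p k.

(** The program [P] computes output digit [n] on input [p] as [m] iff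
    on queries <n, code(p|k)> for k = 0,1,2,... it answers 0 ("need more
    input") until it first answers m+1. *)
Definition t2out (P : rprog) (p : baire) (n m : nat) : Prop :=
  exists k, evalR P [:: cpair n (code_seq (prefix p k))] m.+1 /\
    forall j, j < k -> evalR P [:: cpair n (code_seq (prefix p j))] 0.

Definition t2comp (P : rprog) (p q : baire) : Prop :=
  forall n, t2out P p n (q n).

Record rep := Rep {
  car : Type;
  delta : baire -> car -> Prop   (* graph of the partial representation *)
}.

Record mvf (X Y : rep) := Mvf {
  mdom : car X -> Prop;
  mval : car X -> car Y -> Prop
}.
Arguments delta : clear implicits.
Arguments mdom {X Y}.
Arguments mval {X Y}.

Definition realizes (X Y : rep) (f : mvf X Y)
    (D : baire -> Prop) (F : baire -> baire) : Prop :=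
  forall p x, delta X p x -> mdom f x ->
    D p /\ exists y, delta Y (F p) y /\ mval f x y.

Definition sW_le (X Y Z W : rep) (f : mvf X Y) (g : mvf Z W) : Prop :=
  exists K H : rprog,
    forall (D : baire -> Prop) (G : baire -> baire), realizes g D G ->
      forall p x, delta X p x -> mdom f x ->
        exists q, t2comp H p q /\ D q /\
          exists r, t2comp K (G q) r /\
            exists y, delta Y r y /\ mval f x y.

Definition sW_lt (X Y Z W : rep) (f : mvf X Y) (g : mvf Z W) : Prop :=
  sW_le f g /\ ~ sW_le g f.

Definition discr (n : nat) : rep :=
  @Rep 'I_n.+1 (fun p i => p 0 = i).

(** closed subsets of {0..n}, named by an enumeration of the complement
    (k is listed as k+1; 0 means "nothing") *)
Definition closed_discr (n : nat) : rep :=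
  @Rep {set 'I_n.+1}
    (fun p A => forall i : 'I_n.+1, i \in A <-> (forall k, p k <> (i : nat).+1)).

Definition C_fin (n : nat) : mvf (closed_discr n) (discr n) :=
  @Mvf (closed_discr n) (discr n) (fun A => A != set0) (fun A i => i \in A).

Definition cantor : rep :=
  @Rep (nat -> bool) (fun p x => forall k, p k = nat_of_bool (x k)).

(** bijective coding of binary words by naturals *)
Fixpoint wcode (w : seq bool) : nat :=
  if w is b :: w' then (wcode w').*2 + b + 1 else 0.

Definition inT (p : baire) (w : seq bool) : bool := p (wcode w) == 1.

(** [p] is the characteristic function of a binary tree (prefix closed);
    words are read from the root, children of [w] are [rcons w b] *)
Definition is_tree (p : baire) : Prop :=
  (forall i, p i <= 1) /\ (forall w b, inT p (rcons w b) -> inT p w).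

Definition bprefix (x : nat -> bool) (k : nat) : seq bool := mkseq x k.

Definition closed_cantor : rep :=
  @Rep ((nat -> bool) -> Prop)
    (fun p A => is_tree p /\ forall x, A x <-> (forall k, inT p (bprefix x k))).

Definition C_cantor : mvf closed_cantor cantor :=
  @Mvf closed_cantor cantor (fun A => exists x, A x) (fun A x => A x).

Fixpoint words (k : nat) : seq (seq bool) :=
  if k is k'.+1 then [seq b :: w | b <- [:: false; true], w <- words k']
  else [:: [::]].

Definition tree_sharp (m : nat) (p : baire) : Prop :=
  (forall k, m <= 2 ^ k -> count (inT p) (words k) = m) /\
  (exists d, forall w, d <= size w -> inT p w ->
      inT p (rcons w false) != inT p (rcons w true)).

Definition closed_sharp (m : nat) : rep :=
  @Rep ((nat -> bool) -> Prop)
    (fun p A => delta closed_cantor p A /\ tree_sharp m p).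

(** C_{#=m}: restriction of C_{2^N} to such names *)
Definition C_sharp (m : nat) : mvf (closed_sharp m) cantor :=
  @Mvf (closed_sharp m) cantor (fun A => exists x, A x) (fun A x => A x).

(** The reduction [C_{0..n} <=sW C_{#=n+1}] turns an enumeration of the
    complement of [A] into a tree with exactly [n+1] infinite paths, each
    labelled by its first [L] bits ([2^L >= n+1]) with an element of
    [{0..n}].  Initially every label occurs once; whenever some label is
    enumerated out of [A], one path carrying it is killed and a path with a
    label still in [A] (such a label exists since [A] is nonempty) is split
    in two.  Each label is enumerated out at most once, so after finitely
    many stages all surviving labels lie in [A], and reading the label off
    any path solves [C_{0..n}].

    Conversely, a realizer of [C_{0..n}] may answer with a constant sequence
    [j], so the output reduction applied to it produces at most [n+1]
    sequences [y_0, ..., y_n].  The tree whose [n+1] paths have distinct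
    labels and bit [L+j] equal to the complement of [y_j(L+j)] is a valid
    instance of [C_{#=n+1}] none of whose paths is some [y_j]. *)

From Pilot Require Import Defs.
From mathcomp Require Import all_boot.
From mathcomp Require Import ring zify.
From Stdlib Require Import ClassicalEpsilon.

Set Implicit Arguments.
Unset Strict Implicit.
Unset Printing Implicit Defensive.

Fixpoint evalR_functional P xs z (d : evalR P xs z) {struct d} :
  forall z', evalR P xs z' -> z = z'
with evalL_functional gs xs ys (d : evalL gs xs ys) {struct d} :
  forall ys', evalL gs xs ys' -> ys = ys'.
Proof.
- destruct d as [xs|x xs|i xs Hi|f gs xs ys z dL dR|f g xs y d0
                |f g n xs r y d1 d2|f xs n d0 Hlt]; intros z' d'.
  + by inversion d'.
  + by inversion d'.
  + by inversion d'.
  + have IL := evalL_functional _ _ _ dL; have IR := evalR_functional _ _ _ dR.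
    inversion d'; subst.
    match goal with H : evalL _ _ _ |- _ => have E := IL _ H end; subst.
    match goal with H : evalR f _ _ |- _ => exact: IR _ H end.
  + have I0 := evalR_functional _ _ _ d0.
    inversion d'; subst.
    match goal with H : evalR f _ _ |- _ => exact: I0 _ H end.
  + have I1 := evalR_functional _ _ _ d1; have I2 := evalR_functional _ _ _ d2.
    inversion d'; subst.
    match goal with H : evalR (rPrim _ _) _ _ |- _ => have E := I1 _ H end; subst.
    match goal with H : evalR g _ _ |- _ => exact: I2 _ H end.
  + have I0 := evalR_functional _ _ _ d0.
    have Ipos m : m < n -> forall z'', evalR f (m :: xs) z'' -> 0 < z''.
      move=> Hm z'' Hz; case: (Hlt m Hm) => k Hk.
      by rewrite -(evalR_functional _ _ _ Hk _ Hz).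
    clear Hlt d0; inversion d'; subst.
    case: (ltngtP n z') => // Hc.
    * by have [k /I0] := H1 _ Hc.
    * match goal with H : evalR f (z' :: _) 0 |- _ => by have := Ipos _ Hc _ H end.
- destruct d as [xs|g gs xs y ys dR dL]; intros ys' d'.
  + by inversion d'.
  + have I1 := evalR_functional _ _ _ dR; have I2 := evalL_functional _ _ _ dL.
    inversion d'; subst.
    match goal with H : evalR g _ _ |- _ => have E1 := I1 _ H end.
    match goal with H : evalL gs _ _ |- _ => have E2 := I2 _ H end.
    by subst.
Qed.

Lemma t2out_functional P p n m1 m2 : t2out P p n m1 -> t2out P p n m2 -> m1 = m2.
Proof.
case=> k1 [E1 L1] [k2 [E2 L2]].
case: (ltngtP k1 k2) => H.
- by have := evalR_functional E1 (L2 _ H).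
- by have := evalR_functional E2 (L1 _ H).
- by subst; have [] := evalR_functional E1 E2.
Qed.

Lemma t2comp_functional P p q1 q2 : t2comp P p q1 -> t2comp P p q2 -> q1 =1 q2.
Proof. by move=> H1 H2 n; apply: t2out_functional (H1 n) (H2 n). Qed.

(** * Closure properties of mu-recursive functions *)

Definition computable (a : nat) (f : seq nat -> nat) : Prop :=
  exists P, forall xs, size xs = a -> evalR P xs (f xs).

Lemma computable_ext a f g :
  (forall xs, size xs = a -> f xs = g xs) -> computable a f -> computable a g.
Proof. by move=> E [P HP]; exists P => xs Hs; rewrite -E //; apply: HP. Qed.

Fixpoint all_computable a (gs : seq (seq nat -> nat)) : Prop :=
  if gs is g :: gs' then computable a g /\ all_computable a gs' else True.

Lemma all_computableP a gs : all_computable a gs ->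
  exists Ps, forall xs, size xs = a -> evalL Ps xs [seq g xs | g <- gs].
Proof.
elim: gs => [|g gs IH] /=; first by exists [::] => xs _; constructor.
case=> [[P HP] /IH [Ps HPs]]; exists (P :: Ps) => xs Hs; constructor; auto.
Qed.

Lemma all_computable_map b (s : seq nat) F :
  (forall i, i \in s -> computable b (F i)) -> all_computable b (map F s).
Proof.
elim: s => //= i s IH H; split; first by apply: H; rewrite inE eqxx.
by apply: IH => j Hj; apply: H; rewrite inE Hj orbT.
Qed.

Lemma computable_comp a b f gs : computable b f -> size gs = b ->
  all_computable a gs -> computable a (fun xs => f [seq g xs | g <- gs]).
Proof.
move=> [P HP] Hb /all_computableP [Ps HPs]; exists (rComp P Ps) => xs Hs.
by apply: ev_comp (HPs _ Hs) _; apply: HP; rewrite size_map.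
Qed.

Lemma computable_comp1 a (f : nat -> nat) g :
  computable 1 (fun xs => f (nth 0 xs 0)) -> computable a g ->
  computable a (fun xs => f (g xs)).
Proof. by move=> Hf Hg; apply: (computable_comp (gs := [:: g]) Hf). Qed.

Lemma computable_comp2 a (f : nat -> nat -> nat) g1 g2 :
  computable 2 (fun xs => f (nth 0 xs 0) (nth 0 xs 1)) ->
  computable a g1 -> computable a g2 -> computable a (fun xs => f (g1 xs) (g2 xs)).
Proof. by move=> Hf H1 H2; apply: (computable_comp (gs := [:: g1; g2]) Hf). Qed.

Lemma computable_proj a i : i < a -> computable a (fun xs => nth 0 xs i).
Proof. by move=> Hi; exists (rProj i) => xs Hs; constructor; rewrite Hs. Qed.
Arguments computable_proj : clear implicits.

Lemma computable_succ a f : computable a f -> computable a (fun xs => (f xs).+1).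
Proof.
move=> [P HP]; exists (rComp rSucc [:: P]) => xs Hs.
by apply: (@ev_comp _ _ _ [:: f xs]); do !constructor; apply: HP.
Qed.

Lemma computable_const a c : computable a (fun _ => c).
Proof.
elim: c => [|c IH]; last exact: computable_succ IH.
by exists rZero => xs _; constructor.
Qed.
Arguments computable_const : clear implicits.

Lemma computable_behead a f : computable a f -> computable a.+1 (fun xs => f (behead xs)).
Proof.
move=> Hf.
have Htl : all_computable a.+1 [seq (fun xs => nth 0 xs i.+1) | i <- iota 0 a].
  apply: all_computable_map => i; rewrite mem_iota add0n => /andP[_ Hi].
  exact: computable_proj.
apply: computable_ext (computable_comp Hf _ Htl); last by rewrite size_map size_iota.
move=> xs Hs; congr f; rewrite -map_comp.
apply: (@eq_from_nth _ 0); first by rewrite size_map size_iota size_behead Hs.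
move=> i; rewrite size_map size_iota => Hi.
by rewrite (nth_map 0) ?size_iota //= nth_iota // add0n nth_behead.
Qed.

Lemma computable_primrec a f (g : nat -> nat -> seq nat -> nat) :
  computable a f ->
  computable a.+2 (fun xs => g (nth 0 xs 0) (nth 0 xs 1) (drop 2 xs)) ->
  computable a.+1 (fun xs => iteri (nth 0 xs 0) (fun i r => g i r (behead xs)) (f (behead xs))).
Proof.
move=> [Pf Hf] [Pg Hg]; exists (rPrim Pf Pg) => [[|n ys]] //= [Hs].
elim: n => [|n IH] /=; first by constructor; apply: Hf.
apply: ev_primS IH _.
by have := Hg [:: n, _ & ys]; rewrite /= drop0; apply; rewrite Hs.
Qed.

Lemma computable_iteri a N I (g : nat -> nat -> seq nat -> nat) :
  computable a N -> computable a I ->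
  computable a.+2 (fun xs => g (nth 0 xs 0) (nth 0 xs 1) (drop 2 xs)) ->
  computable a (fun xs => iteri (N xs) (fun i r => g i r xs) (I xs)).
Proof.
move=> HN HI Hg.
have Hargs : all_computable a (N :: [seq (fun xs => nth 0 xs i) | i <- iota 0 a]).
  split=> //; apply: all_computable_map => i.
  by rewrite mem_iota add0n => /andP[_ Hi]; apply: computable_proj.
apply: computable_ext (computable_comp (computable_primrec HI Hg) _ Hargs);
  last by rewrite /= size_map size_iota.
move=> xs Hs /=.
suff -> : [seq h xs | h <- [seq (fun ys => nth 0 ys i) | i <- iota 0 a]] = xs by [].
rewrite -map_comp; apply: (@eq_from_nth _ 0); first by rewrite size_map size_iota Hs.
move=> i; rewrite size_map size_iota => Hi.
by rewrite (nth_map 0) ?size_iota //= nth_iota.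
Qed.

Lemma computable_add a f g :
  computable a f -> computable a g -> computable a (fun xs => f xs + g xs).
Proof.
apply: computable_comp2.
have H := computable_primrec (g := fun _ r _ => r.+1) (computable_proj 1 0 erefl)
  (computable_succ (computable_proj 3 1 erefl)).
apply: computable_ext H => [[|x [|y []]]] //= _.
by elim: x => //= x ->.
Qed.

Lemma computable_mul a f g :
  computable a f -> computable a g -> computable a (fun xs => f xs * g xs).
Proof.
apply: computable_comp2.
have Hstep : computable 3 (fun xs => nth 0 xs 1 + nth 0 (drop 2 xs) 0).
  apply: computable_ext (computable_add (computable_proj 3 1 erefl)
                                        (computable_proj 3 2 erefl)) => xs _.
  by rewrite nth_drop.
have H := computable_primrec (g := fun _ r ys => r + nth 0 ys 0)
  (computable_const 1 0) Hstep.
apply: computable_ext H => [[|x [|y []]]] //= _.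
by elim: x => //= x ->; rewrite mulSn addnC.
Qed.

Lemma computable_pred a f : computable a f -> computable a (fun xs => (f xs).-1).
Proof.
apply: computable_comp1.
have H := computable_primrec (g := fun n _ _ => n) (computable_const 0 0)
  (computable_proj 2 0 erefl).
by apply: computable_ext H => [[|[|x] []]].
Qed.

Lemma computable_sub a f g :
  computable a f -> computable a g -> computable a (fun xs => f xs - g xs).
Proof.
move=> Hf Hg; apply: (computable_comp2 (f := fun x y => y - x)) Hg Hf.
have H := computable_primrec (g := fun _ r _ => r.-1) (computable_proj 1 0 erefl)
  (computable_pred (computable_proj 3 1 erefl)).
apply: computable_ext H => [[|x [|y []]]] //= _.
by elim: x => /= [|x ->]; rewrite ?subn0 // subnS.
Qed.

Lemma computable_exp2 a f : computable a f -> computable a (fun xs => 2 ^ f xs).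
Proof.
apply: computable_comp1.
have H := computable_primrec (g := fun _ r _ => r + r) (computable_const 0 1)
  (computable_add (computable_proj 2 1 erefl) (computable_proj 2 1 erefl)).
apply: computable_ext H => [[|x []]] //= _.
by elim: x => //= x ->; rewrite expnS mul2n addnn.
Qed.

(** Booleans are computed as [0] and [1]. *)
Lemma computable_negb a (b : seq nat -> bool) :
  computable a (fun xs => b xs) -> computable a (fun xs => ~~ b xs).
Proof.
move=> H; apply: computable_ext (computable_sub (computable_const a 1) H) => xs _.
by case: (b xs).
Qed.

Lemma computable_andb a (b1 b2 : seq nat -> bool) :
  computable a (fun xs => b1 xs) -> computable a (fun xs => b2 xs) ->
  computable a (fun xs => b1 xs && b2 xs).
Proof.
move=> H1 H2; apply: computable_ext (computable_mul H1 H2) => xs _.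
by case: (b1 xs); case: (b2 xs).
Qed.

Lemma computable_orb a (b1 b2 : seq nat -> bool) :
  computable a (fun xs => b1 xs) -> computable a (fun xs => b2 xs) ->
  computable a (fun xs => b1 xs || b2 xs).
Proof.
move=> H1 H2.
apply: computable_ext
  (computable_negb (computable_andb (computable_negb H1) (computable_negb H2))) => xs _.
by case: (b1 xs); case: (b2 xs).
Qed.

Lemma computable_leq a f g :
  computable a f -> computable a g -> computable a (fun xs => f xs <= g xs).
Proof.
move=> Hf Hg.
have Hpos : computable 1 (fun xs => 0 < nth 0 xs 0).
  have H := computable_sub (computable_const 1 1)
    (computable_sub (computable_const 1 1) (computable_proj 1 0 erefl)).
  by apply: computable_ext H => xs _; case: (nth 0 xs 0).
apply: computable_ext (computable_negb
  (computable_comp1 (f := fun x => 0 < x) Hpos (computable_sub Hf Hg))).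
by move=> xs _; rewrite lt0n negbK subn_eq0.
Qed.

Lemma computable_ltn a f g :
  computable a f -> computable a g -> computable a (fun xs => f xs < g xs).
Proof. by move=> Hf Hg; apply: computable_leq (computable_succ Hf) Hg. Qed.

Lemma computable_eqn a f g :
  computable a f -> computable a g -> computable a (fun xs => f xs == g xs).
Proof.
move=> Hf Hg.
apply: computable_ext (computable_andb (computable_leq Hf Hg) (computable_leq Hg Hf)).
by move=> xs _; rewrite eqn_leq.
Qed.

Lemma computable_if a (b : seq nat -> bool) f g :
  computable a (fun xs => b xs) -> computable a f -> computable a g ->
  computable a (fun xs => if b xs then f xs else g xs).
Proof.
move=> Hb Hf Hg.
apply: computable_ext (computable_add (computable_mul Hb Hf)
                                      (computable_mul (computable_negb Hb) Hg)) => xs _.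
by case: (b xs); rewrite /= ?mul1n ?mul0n ?addn0.
Qed.

(** Bounded minimisation: the least [m < b] satisfying [P], or [b]. *)
Definition bmin (P : pred nat) b := find P (iota 0 b).

Lemma bmin_le (P : pred nat) b : bmin P b <= b.
Proof. by rewrite /bmin -{2}(size_iota 0 b) find_size. Qed.

Lemma bmin_sat (P : pred nat) b : bmin P b < b -> P (bmin P b).
Proof.
move=> H; have := @nth_find _ 0 P (iota 0 b).
by rewrite has_find size_iota => /(_ H); rewrite nth_iota.
Qed.

Lemma bmin_min (P : pred nat) b m : m < bmin P b -> ~~ P m.
Proof.
move=> H; have Hb : m < b := leq_trans H (bmin_le P b).
by have := @before_find _ 0 P (iota 0 b) m H; rewrite nth_iota // => ->.
Qed.

Lemma bmin_le_sat (P : pred nat) b m : P m -> m < b -> bmin P b <= m.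
Proof. by move=> Hm Hb; rewrite leqNgt; apply/negP => /bmin_min; rewrite Hm. Qed.

Lemma bminE (P : pred nat) b m :
  m <= b -> (m < b -> P m) -> (forall j, j < m -> ~~ P j) -> bmin P b = m.
Proof.
move=> Hm HP Hj; case: (ltngtP (bmin P b) m) => // H.
- by have := Hj _ H; rewrite bmin_sat // (leq_trans H Hm).
- have Hmb : m < b := leq_trans H (bmin_le P b).
  by have := bmin_min H; rewrite HP.
Qed.

Lemma eq_bmin (P Q : pred nat) b : P =1 Q -> bmin P b = bmin Q b.
Proof. by move=> E; rewrite /bmin (eq_find E). Qed.

Lemma computable_bmin a (P : nat -> seq nat -> bool) B :
  computable a.+1 (fun xs => P (nth 0 xs 0) (behead xs)) -> computable a B ->
  computable a (fun xs => bmin (P ^~ xs) (B xs)).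
Proof.
move=> HP HB.
(* [rMin] searches for the first zero of [~~ P m * (B - m)]. *)
have [PQ HQ] := computable_mul (computable_negb HP)
  (computable_sub (computable_behead HB) (computable_proj a.+1 0 erefl)).
exists (rMin PQ) => xs Hs; constructor.
  have := HQ (bmin (P ^~ xs) (B xs) :: xs); rewrite /= Hs => /(_ erefl).
  have := bmin_le (P ^~ xs) (B xs).
  rewrite leq_eqVlt => /orP[/eqP E|H]; first by rewrite E subnn muln0.
  by rewrite (bmin_sat H).
move=> m Hm; have Hmb : m < B xs := leq_trans Hm (bmin_le _ _).
have := HQ (m :: xs); rewrite /= Hs => /(_ erefl).
rewrite (negPf (bmin_min Hm)) /= mul1n.
case E: (B xs - m) => [|k]; last by move=> H; exists k.
by move: Hmb; rewrite -subn_gt0 E.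
Qed.

(** * Decoding pairs and coded sequences *)

Definition triangle (s : nat) : nat := iteri s (fun i r => r + i.+1) 0.

Lemma triangle_double s : (triangle s).*2 = s * s.+1.
Proof. by elim: s => //= s IH; rewrite doubleD IH -!muln2; ring. Qed.

Lemma cpairE a b : cpair a b = triangle (a + b) + b.
Proof. by rewrite /cpair -triangle_double -muln2 mulnK. Qed.

Lemma computable_triangle a f : computable a f -> computable a (fun xs => triangle (f xs)).
Proof.
apply: computable_comp1.
exact: (computable_iteri (g := fun i r _ => r + i.+1) (computable_proj 1 0 erefl)
  (computable_const 1 0)
  (computable_add (computable_proj 3 1 erefl) (computable_succ (computable_proj 3 0 erefl)))).
Qed.

Lemma computable_cpair a f g :
  computable a f -> computable a g -> computable a (fun xs => cpair (f xs) (g xs)).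
Proof.
move=> Hf Hg.
apply: computable_ext (computable_add (computable_triangle (computable_add Hf Hg)) Hg).
by move=> xs _; rewrite cpairE.
Qed.

(** [cpair_sum z] is the diagonal [a + b] on which [z = cpair a b] lies. *)
Definition cpair_sum z := (bmin (fun t => z.*2 < t * t.+1) z.+2).-1.
Definition unpair2 z := z - triangle (cpair_sum z).
Definition unpair1 z := cpair_sum z - unpair2 z.

Lemma cpair_sumE a b : cpair_sum (cpair a b) = a + b.
Proof.
rewrite /cpair_sum; set s := a + b; set z := cpair a b.
suff -> : bmin (fun t => z.*2 < t * t.+1) z.+2 = s.+1 by [].
have T2 := triangle_double s.
have Ts : s <= triangle s by elim: (s) => //= t IH; rewrite addnS ltnS leq_addl.
have Hb : b <= s by rewrite leq_addl.
apply: bminE.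
- rewrite /z cpairE -/s; lia.
- by move=> _; rewrite /z cpairE -/s doubleD T2 -!muln2; nia.
- move=> j Hj; rewrite -leqNgt /z cpairE doubleD T2 -!muln2.
  have : j * j.+1 <= s * s.+1 by apply: leq_mul; lia.
  lia.
Qed.

Lemma unpair2_cpair a b : unpair2 (cpair a b) = b.
Proof. by rewrite /unpair2 cpair_sumE cpairE addKn. Qed.

Lemma unpair1_cpair a b : unpair1 (cpair a b) = a.
Proof. by rewrite /unpair1 unpair2_cpair cpair_sumE addnK. Qed.

Lemma computable_cpair_sum a f : computable a f -> computable a (fun xs => cpair_sum (f xs)).
Proof.
apply: computable_comp1; apply: computable_pred.
apply: (computable_bmin (P := fun t xs => (nth 0 xs 0).*2 < t * t.+1)); last first.
  exact: computable_succ (computable_succ (computable_proj 1 0 erefl)).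
apply: computable_ext (computable_ltn
  (computable_add (computable_proj 2 1 erefl) (computable_proj 2 1 erefl))
  (computable_mul (computable_proj 2 0 erefl)
                  (computable_succ (computable_proj 2 0 erefl)))) => xs _.
by rewrite nth_behead addnn.
Qed.

Lemma computable_unpair2 a f : computable a f -> computable a (fun xs => unpair2 (f xs)).
Proof. by move=> H; apply: computable_sub H (computable_triangle (computable_cpair_sum H)). Qed.

Lemma computable_unpair1 a f : computable a f -> computable a (fun xs => unpair1 (f xs)).
Proof. by move=> H; apply: computable_sub (computable_cpair_sum H) (computable_unpair2 H). Qed.

Definition code_head c := unpair1 c.-1.
Definition code_tail c := unpair2 c.-1.
Definition code_drop l c := iter l code_tail c.
Definition code_nth j c := code_head (code_drop j c).
Definition code_size c := bmin (fun l => code_drop l c == 0) c.+1.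
Definition code_mem v c := bmin (fun j => code_nth j c == v) (code_size c) < code_size c.

Lemma code_drop_seq l s : code_drop l (code_seq s) = code_seq (drop l s).
Proof.
elim: l => [|l IH]; first by rewrite drop0.
rewrite /code_drop iterS -/(code_drop l _) IH.
case: (ltnP l (size s)) => H; last by rewrite !drop_oversize // ltnW.
by rewrite (drop_nth 0 H) /code_tail /= unpair2_cpair.
Qed.

Lemma code_seq_eq0 s : (code_seq s == 0) = (s == [::]).
Proof. by case: s. Qed.

Lemma code_nth_seq j s : j < size s -> code_nth j (code_seq s) = nth 0 s j.
Proof.
by move=> H; rewrite /code_nth code_drop_seq (drop_nth 0 H) /code_head /= unpair1_cpair.
Qed.

Lemma size_le_code_seq s : size s <= code_seq s.
Proof. by elim: s => //= x s IH; rewrite ltnS (leq_trans IH) // cpairE; lia. Qed.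

Lemma code_size_seq s : code_size (code_seq s) = size s.
Proof.
apply: bminE; first exact: leq_trans (size_le_code_seq s) _.
  by move=> _; rewrite code_drop_seq code_seq_eq0 drop_oversize.
move=> j Hj.
by rewrite code_drop_seq code_seq_eq0 -size_eq0 size_drop subn_eq0 -ltnNge.
Qed.

Lemma code_mem_seq v s : code_mem v (code_seq s) = (v \in s).
Proof.
rewrite /code_mem code_size_seq; apply/idP/idP => [H|Hv].
  by have := bmin_sat H; rewrite code_nth_seq // => /eqP <-; apply: mem_nth.
have Hi : index v s < size s by rewrite index_mem.
apply: leq_ltn_trans (Hi); rewrite leqNgt; apply/negP => /bmin_min.
by rewrite code_nth_seq // => /negP; apply; apply/eqP; apply: nth_index.
Qed.

Lemma computable_code_drop a f g :
  computable a f -> computable a g -> computable a (fun xs => code_drop (f xs) (g xs)).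
Proof.
move=> Hf Hg.
have Htl := computable_unpair2 (computable_pred (computable_proj a.+2 1 erefl)).
apply: computable_ext (computable_iteri (g := fun _ r _ => code_tail r) Hf Hg Htl).
by move=> xs _; rewrite /code_drop; elim: (f xs) => //= l ->.
Qed.

Lemma computable_code_nth a f g :
  computable a f -> computable a g -> computable a (fun xs => code_nth (f xs) (g xs)).
Proof. by move=> Hf Hg; apply/computable_unpair1/computable_pred/computable_code_drop. Qed.

Lemma computable_code_size a f : computable a f -> computable a (fun xs => code_size (f xs)).
Proof.
move=> Hf; apply: (computable_bmin (P := fun l xs => code_drop l (f xs) == 0));
  last exact: computable_succ Hf.
apply: computable_eqn (computable_const a.+1 0).
exact: computable_code_drop (computable_proj a.+1 0 erefl) (computable_behead Hf).
Qed.

Lemma computable_code_mem a f g :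
  computable a f -> computable a g -> computable a (fun xs => code_mem (f xs) (g xs)).
Proof.
move=> Hf Hg; apply: computable_ltn (computable_code_size Hg).
apply: (computable_bmin (P := fun j xs => code_nth j (g xs) == f xs));
  last exact: computable_code_size Hg.
apply: computable_eqn (computable_behead Hf).
exact: computable_code_nth (computable_proj a.+1 0 erefl) (computable_behead Hg).
Qed.

(** Words are read as little-endian binary numerals. *)
Fixpoint word_val (w : seq bool) : nat :=
  if w is b :: w' then b + (word_val w').*2 else 0.

Fixpoint val_word (k v : nat) : seq bool :=
  if k is k'.+1 then odd v :: val_word k' v./2 else [::].

Lemma size_val_word k v : size (val_word k v) = k.
Proof. by elim: k v => //= k IH v; rewrite IH. Qed.

Lemma word_val_lt w : word_val w < 2 ^ size w.
Proof.
elim: w => //= b w IH; rewrite expnS mul2n.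
by case: b; rewrite /= ?add0n ?ltn_double ?add1n ?ltn_Sdouble.
Qed.

Lemma word_valK w : val_word (size w) (word_val w) = w.
Proof.
elim: w => //= b w IH; congr cons; first by rewrite oddD odd_double addbF; case: b.
by rewrite -divn2 -muln2 divnDMl // divn_small ?add0n //; case: b.
Qed.

Lemma word_val_inj w1 w2 : size w1 = size w2 -> word_val w1 = word_val w2 -> w1 = w2.
Proof. by move=> Hs Hv; rewrite -(word_valK w1) -(word_valK w2) Hs Hv. Qed.

Lemma modn_double_half v m : 0 < m -> v %% (2 * m) = odd v + (v./2 %% m).*2.
Proof.
move=> Hm.
have E0 := odd_double_half v; have E2 := divn_eq v./2 m.
have Hr : v./2 %% m < m by rewrite ltn_mod.
set q := v./2 %/ m in E2; set r := v./2 %% m in E2 Hr *.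
have E1 : v = q * (2 * m) + (odd v + r.*2) by rewrite -{1}E0 {1}E2 -!muln2; ring.
by rewrite {1}E1 modnMDl modn_small //; case: (odd v); rewrite -muln2; lia.
Qed.

Lemma val_word_modn k v : word_val (val_word k v) = v %% 2 ^ k.
Proof.
elim: k v => [|k IH] v /=; first by rewrite modn1.
by rewrite IH expnS modn_double_half // expn_gt0.
Qed.

Lemma word_val_cat w u : word_val (w ++ u) = word_val w + word_val u * 2 ^ size w.
Proof. by elim: w => [|b w IH] /=; rewrite ?muln1 // IH expnS -!muln2; ring. Qed.

Lemma word_val_cat_modn w u : word_val (w ++ u) %% 2 ^ size w = word_val w.
Proof. by rewrite word_val_cat addnC modnMDl modn_small // word_val_lt. Qed.

Lemma wcode_word_val w : (wcode w).+1 = 2 ^ size w + word_val w.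
Proof.
elim: w => //= b w IH; rewrite expnS.
have -> : wcode w = 2 ^ size w + word_val w - 1 by rewrite -IH subn1.
by have := expn_gt0 2 (size w); rewrite -!muln2; case: b => /=; lia.
Qed.

Lemma size_bprefix x k : size (bprefix x k) = k.
Proof. exact: size_mkseq. Qed.

Lemma bprefixD x j k : bprefix x (j + k) = bprefix x j ++ bprefix (fun i => x (j + i)) k.
Proof.
elim: k => [|k IH]; first by rewrite addn0 cats0.
by rewrite addnS /bprefix !mkseqS -/(bprefix _ _) IH rcons_cat.
Qed.

Lemma word_val_bprefix_modn x j k :
  j <= k -> word_val (bprefix x k) %% 2 ^ j = word_val (bprefix x j).
Proof.
move=> Hjk; rewrite -(subnKC Hjk) bprefixD.
by have := word_val_cat_modn (bprefix x j) (bprefix (fun i => x (j + i)) (k - j));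
  rewrite size_bprefix.
Qed.

Lemma word_val_bprefixS x k :
  word_val (bprefix x k.+1) = word_val (bprefix x k) + x k * 2 ^ k.
Proof. by rewrite /bprefix mkseqS -cats1 word_val_cat size_mkseq /= !addn0. Qed.

Lemma word_val_bprefix x k : word_val (bprefix x k) = \sum_(j < k) x j * 2 ^ j.
Proof.
elim: k => [|k IH]; first by rewrite big_ord0.
by rewrite big_ord_recr -IH word_val_bprefixS.
Qed.

Definition wcat (w : seq bool) (x : nat -> bool) : nat -> bool :=
  fun j => if j < size w then nth false w j else x (j - size w).

Lemma bprefix_wcat w x k :
  size w <= k -> bprefix (wcat w x) k = w ++ bprefix x (k - size w).
Proof.
move=> Hk; rewrite -{1}(subnKC Hk) bprefixD; congr (_ ++ _).
  apply: (@eq_from_nth _ false); rewrite size_bprefix // => j Hj.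
  by rewrite nth_mkseq // /wcat Hj.
by apply: eq_mkseq => j; rewrite /wcat ltnNge leq_addr /= addKn.
Qed.

(** Decoding [wcode]: [2 ^ wcode_size c] is the largest power of two not
    exceeding [c.+1]. *)
Definition wcode_size c := bmin (fun l => c.+1 < 2 ^ l.+1) c.+1.
Definition wcode_val c := c.+1 - 2 ^ wcode_size c.
Definition wdecode c := val_word (wcode_size c) (wcode_val c).

Lemma wcode_sizeE w : wcode_size (wcode w) = size w.
Proof.
rewrite /wcode_size wcode_word_val; have Hv := word_val_lt w.
apply: bminE.
- by have := ltn_expl (size w) (isT : 1 < 2); lia.
- by move=> _; rewrite expnS mul2n -addnn ltn_add2l.
- by move=> j Hj; rewrite -leqNgt (leq_trans _ (leq_addr _ _)) // leq_exp2l.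
Qed.

Lemma wdecodeK w : wdecode (wcode w) = w.
Proof. by rewrite /wdecode /wcode_val wcode_sizeE wcode_word_val addKn word_valK. Qed.

Lemma wcode_val_lt c : wcode_val c < 2 ^ wcode_size c.
Proof.
have Hl : wcode_size c < c.+1.
  have Hc : c.+1 < 2 ^ c.+1 by apply: ltn_expl.
  exact: leq_ltn_trans (bmin_le_sat (P := fun l => c.+1 < 2 ^ l.+1) Hc (ltnSn c)) _.
by have := bmin_sat Hl; rewrite -/(wcode_size c) /wcode_val expnS; lia.
Qed.

Lemma computable_wcode_size a f : computable a f -> computable a (fun xs => wcode_size (f xs)).
Proof.
move=> Hf; apply: (computable_bmin (P := fun l xs => (f xs).+1 < 2 ^ l.+1));
  last exact: computable_succ Hf.
apply: computable_ltn (computable_succ (computable_behead Hf)) _.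
exact: computable_exp2 (computable_succ (computable_proj a.+1 0 erefl)).
Qed.

Lemma computable_wcode_val a f : computable a f -> computable a (fun xs => wcode_val (f xs)).
Proof.
by move=> Hf; apply: computable_sub (computable_succ Hf) (computable_exp2 (computable_wcode_size Hf)).
Qed.

Lemma mem_words k w : (w \in words k) = (size w == k).
Proof.
elim: k w => [|k IH] [|b w] //=; rewrite cats0 mem_cat.
  by apply/negP => /orP[] /mapP [].
rewrite eqSS -IH.
have N1 : (true :: w \in [seq false :: u | u <- words k]) = false by apply/mapP => [[]].
have N2 : (false :: w \in [seq true :: u | u <- words k]) = false by apply/mapP => [[]].
have inj c : injective (@cons bool c) by move=> u v [].
by case: b; rewrite ?N1 ?N2 ?orbF /= (mem_map (inj _)).
Qed.

Lemma uniq_words k : uniq (words k).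
Proof.
have inj c : injective (@cons bool c) by move=> u v [].
elim: k => //= k IH; rewrite cats0 cat_uniq !map_inj_uniq // IH andbT /=.
by apply/hasPn => u /mapP [w _ ->]; apply/mapP => [[]].
Qed.

Lemma count_words_val k (S : seq nat) : uniq S -> all (fun v => v < 2 ^ k) S ->
  count (fun w => word_val w \in S) (words k) = size S.
Proof.
move=> US HS.
have Uval : uniq [seq word_val w | w <- words k].
  rewrite map_inj_in_uniq ?uniq_words // => w1 w2.
  by rewrite !mem_words => /eqP H1 /eqP H2; apply: word_val_inj; rewrite H1 H2.
rewrite -count_map -size_filter; apply/perm_size/uniq_perm => // [|v].
  exact: filter_uniq.
rewrite mem_filter andb_idr // => Hv; apply/mapP; exists (val_word k v).
  by rewrite mem_words size_val_word.
by rewrite val_word_modn modn_small // (allP HS).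
Qed.

(** Below depth [L] the tree is complete; from depth [L] on, its level [k]
    is given by the values of its words, [Sf k]. *)
Section LevelTree.
Variables (L : nat) (Sf : nat -> seq nat).

Definition in_levels (w : seq bool) : bool := (size w < L) || (word_val w \in Sf (size w)).

Definition level_tree : baire := fun c => in_levels (wdecode c).

Lemma inT_level_tree w : inT level_tree w = in_levels w.
Proof. by rewrite /inT /level_tree wdecodeK; case: (in_levels w). Qed.

Lemma level_tree_sharp m :
  m <= 2 ^ L -> (forall k, m <= 2 ^ k -> L <= k) ->
  (forall k, L <= k ->
     [/\ uniq (Sf k), size (Sf k) = m & all (fun v => v < 2 ^ k) (Sf k)]) ->
  (forall k v, L <= k -> v \in Sf k.+1 -> v %% 2 ^ k \in Sf k) ->
  (exists d, forall k v, d <= k -> L <= k -> v \in Sf k ->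
      (v \in Sf k.+1) != (v + 2 ^ k \in Sf k.+1)) ->
  is_tree level_tree /\ tree_sharp m level_tree.
Proof.
move=> mL Lmin Hlevel Hparent [d Hsplit]; split; first split.
- by move=> c; rewrite /level_tree; case: (in_levels _).
- move=> w b; rewrite !inT_level_tree /in_levels size_rcons.
  case: (ltnP (size w) L) => //= HL.
  rewrite ltnNge (leq_trans HL) //= -cats1 word_val_cat => /(Hparent _ _ HL).
  by rewrite addnC modnMDl modn_small // word_val_lt.
split.
- move=> k Hk; have HLk := Lmin _ Hk; have [U Sz A] := Hlevel _ HLk.
  rewrite -Sz -(count_words_val U A).
  apply: eq_in_count => w; rewrite mem_words => /eqP Hw.
  by rewrite inT_level_tree /in_levels Hw ltnNge HLk.
- exists (maxn d L) => w; rewrite geq_max => /andP[Hd HL].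
  rewrite !inT_level_tree /in_levels !size_rcons ltnNge HL /= => Hw.
  rewrite !ltnNge (leq_trans HL) //= -!cats1 !word_val_cat /= mul0n mul1n addn0.
  exact: Hsplit.
Qed.

End LevelTree.

(** Paths of the trees below are labelled by their first [label_len n] bits. *)
Definition label_len (n : nat) : nat := up_log 2 n.+1.

Lemma label_len_gt n : n < 2 ^ label_len n.
Proof. exact: up_logP. Qed.

Lemma label_len_min n k : n.+1 <= 2 ^ k -> label_len n <= k.
Proof. exact: up_log_min. Qed.

(** * [C_{#=n+1}] does not reduce to [C_{0..n}] *)

Section Diagonal.
Variables (n : nat) (y : nat -> nat -> bool).
Local Notation L := (label_len n).

Definition diag_path (i : nat) : nat -> bool := wcat (val_word L i) (fun j => ~~ y j (L + j)).

Definition diag_level (k : nat) : seq nat :=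
  [seq word_val (bprefix (diag_path i) k) | i <- iota 0 n.+1].

Local Notation diag_tree := (level_tree L diag_level).

Lemma diag_path_label i k :
  i <= n -> L <= k -> word_val (bprefix (diag_path i) k) %% 2 ^ L = i.
Proof.
move=> Hi Hk; rewrite /diag_path bprefix_wcat size_val_word //.
have := word_val_cat_modn (val_word L i) (bprefix (fun j => ~~ y j (L + j)) (k - L)).
rewrite size_val_word => ->.
by rewrite val_word_modn modn_small // (leq_ltn_trans Hi (label_len_gt n)).
Qed.

Lemma diag_level_child i k (b : bool) : i <= n -> L <= k ->
  (word_val (bprefix (diag_path i) k) + b * 2 ^ k \in diag_level k.+1)
  = (diag_path i k == b).
Proof.
move=> Hi Hk; apply/mapP/eqP => [[i' Hi' E]|<-]; last first.
  by exists i; rewrite ?word_val_bprefixS // mem_iota ltnS.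
rewrite mem_iota add0n ltnS in Hi'; move: E; rewrite word_val_bprefixS.
have := word_val_lt (bprefix (diag_path i) k); have := word_val_lt (bprefix (diag_path i') k).
rewrite !size_bprefix.
set v := word_val _; set v' := word_val _ => Hv' Hv E.
have [Ev Eb] : v = v' /\ b = diag_path i' k.
  by move: E Hv Hv'; case: b; case: (diag_path i' k) => /=; lia.
have Ei : i = i' by rewrite -(diag_path_label Hi Hk) -(diag_path_label Hi' Hk) -/v -/v' Ev.
by rewrite Eb Ei.
Qed.

Lemma diag_tree_sharp : is_tree diag_tree /\ tree_sharp n.+1 diag_tree.
Proof.
apply: level_tree_sharp; [exact: label_len_gt | exact: label_len_min | | | ].
- move=> k Hk; split; last first.
  + apply/allP => v /mapP [i _ ->].
    by have := word_val_lt (bprefix (diag_path i) k); rewrite size_bprefix.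
  + by rewrite size_map size_iota.
  + rewrite map_inj_in_uniq ?iota_uniq // => i1 i2.
    rewrite !mem_iota !add0n !ltnS => H1 H2 E.
    by rewrite -(diag_path_label H1 Hk) -(diag_path_label H2 Hk) E.
- move=> k v Hk /mapP [i Hi ->]; rewrite word_val_bprefix_modn //.
  by apply/mapP; exists i.
- exists L => k v _ Hk /mapP [i Hi ->].
  rewrite mem_iota add0n ltnS in Hi.
  have := diag_level_child false Hi Hk; rewrite mul0n addn0 => ->.
  have := diag_level_child true Hi Hk; rewrite mul1n => ->.
  by case: (diag_path i k).
Qed.

Lemma diag_path_in_tree k : inT diag_tree (bprefix (diag_path 0) k).
Proof.
rewrite inT_level_tree /in_levels size_bprefix.
by case: ltnP => //= Hk; apply/mapP; exists 0.
Qed.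

(** The path of [diag_tree] through [y j] would have to agree with some
    [diag_path i] at depth [L + j], where [diag_path i] differs from [y j]. *)
Lemma diag_tree_avoids j x : j <= n -> x =1 y j -> ~ (forall k, inT diag_tree (bprefix x k)).
Proof.
move=> Hj Ex H.
have := H (L + j).+1; rewrite inT_level_tree /in_levels size_bprefix ltnNge.
rewrite (_ : L <= (L + j).+1) ?orFb; last lia.
move=> /mapP [i Hi E].
have {}E : bprefix x (L + j).+1 = bprefix (diag_path i) (L + j).+1.
  by apply: word_val_inj E; rewrite !size_bprefix.
have := congr1 (fun s => nth false s (L + j)) E.
rewrite /bprefix !nth_mkseq // /diag_path /wcat size_val_word ltnNge leq_addr /= addKn Ex.
by case: (y j (L + j)).
Qed.

End Diagonal.

Definition choice_realizer (n : nat) (q : baire) : nat :=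
  match excluded_middle_informative (exists i, i <= n /\ forall k, q k <> i.+1) with
  | left e => proj1_sig (constructive_indefinite_description _ e)
  | right _ => 0
  end.

Lemma choice_realizer_le n q : choice_realizer n q <= n.
Proof.
rewrite /choice_realizer; case: excluded_middle_informative => // e.
by case: (constructive_indefinite_description _ e) => /= i [].
Qed.

Lemma choice_realizerP n : realizes (C_fin n) (fun _ => True) (fun q _ => choice_realizer n q).
Proof.
move=> p A HA /set0Pn [i Hi]; split => //.
have Hle : choice_realizer n p < n.+1 by rewrite ltnS choice_realizer_le.
exists (Ordinal Hle); split => //=; apply/HA => /=.
rewrite /choice_realizer; case: excluded_middle_informative => [e|[]].
  by case: (constructive_indefinite_description _ e) => /= j [].
by exists i; split; [rewrite -ltnS | apply/HA].
Qed.

Theorem C_sharp_not_sW_le_C_fin n : ~ sW_le (C_sharp n.+1) (C_fin n).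
Proof.
move=> [K [H HKH]].
pose y (j : nat) : nat -> bool :=
  match excluded_middle_informative (exists r, t2comp K (fun _ => j) r) with
  | left e => fun k => proj1_sig (constructive_indefinite_description _ e) k == 1
  | right _ => fun _ => false
  end.
set T := level_tree (label_len n) (diag_level n y).
set A := fun x : nat -> bool => forall k, inT T (bprefix x k).
have HA : delta (closed_sharp n.+1) T A by have [] := diag_tree_sharp n y.
have Hne : mdom (C_sharp n.+1) A by exists (diag_path n y 0); apply: diag_path_in_tree.
have [q [_ [_ [r [Hr [x [Hx Ax]]]]]]] := HKH _ _ (@choice_realizerP n) T A HA Hne.
apply: (diag_tree_avoids (@choice_realizer_le n q) _ Ax) => k.
rewrite /y; case: excluded_middle_informative => [e|[]]; last by exists r.
case: (constructive_indefinite_description _ e) => /= r' Hr'.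
by rewrite (t2comp_functional Hr' Hr) Hx; case: (x k).
Qed.

(** * [C_{0..n}] reduces to [C_{#=n+1}] *)

(** Level [L + t] of the tree built from [R k i] ("[i] has been enumerated
    out of [A] by stage [k]"), as the values of its [n+1] words.  A word
    [v] of level [k] carries the label [v %% 2 ^ L] and its left child has
    the same value [v]. *)
Section Pruning.
Variables (n : nat) (R : nat -> nat -> bool).
Local Notation L := (label_len n).

Definition bad k v := R k (v %% 2 ^ L).
Definition first_bad k (S : seq nat) := bmin (fun v => (v \in S) && bad k v) (2 ^ k).
Definition first_good k (S : seq nat) := bmin (fun v => (v \in S) && ~~ bad k v) (2 ^ k).

(** Kill the first bad word and give the first good word both children. *)
Definition prune_step k (S : seq nat) :=
  if first_bad k S < 2 ^ k then (first_good k S + 2 ^ k) :: rem (first_bad k S) S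
  else S.

Fixpoint prune_level t :=
  if t is t'.+1 then prune_step (L + t') (prune_level t') else iota 0 n.+1.

Lemma prune_level0 : prune_level 0 = iota 0 n.+1. Proof. by []. Qed.
Lemma prune_levelS t : prune_level t.+1 = prune_step (L + t) (prune_level t). Proof. by []. Qed.

Lemma modn_add_exp2 v t : (v + 2 ^ (L + t)) %% 2 ^ L = v %% 2 ^ L.
Proof. by rewrite expnD mulnC addnC modnMDl. Qed.

Lemma first_bad_sat k S :
  first_bad k S < 2 ^ k -> (first_bad k S \in S) && bad k (first_bad k S).
Proof. exact: bmin_sat. Qed.

Variable i0 : nat.
Hypothesis i0_le : i0 <= n.
Hypothesis R_i0 : forall k, R k i0 = false.

Lemma bad_i0 k : bad k i0 = false.
Proof. by rewrite /bad modn_small ?R_i0 // (leq_ltn_trans i0_le (label_len_gt n)). Qed.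

Lemma mem_prune_level_i0 t : i0 \in prune_level t.
Proof.
elim: t => [|t IH]; first by rewrite prune_level0 mem_iota.
rewrite prune_levelS /prune_step; case: ifP => // Hd; rewrite inE; apply/orP; right.
have /andP[_ Hb] := first_bad_sat Hd.
by apply: rem_mem IH; apply/eqP => E; rewrite -E bad_i0 in Hb.
Qed.

Lemma first_good_lt t : first_good (L + t) (prune_level t) < 2 ^ (L + t).
Proof.
have Hlt : i0 < 2 ^ (L + t).
  by apply: leq_ltn_trans i0_le (leq_trans (label_len_gt n) _); rewrite leq_exp2l // leq_addr.
by apply: leq_ltn_trans (bmin_le_sat _ Hlt) Hlt; rewrite mem_prune_level_i0 bad_i0.
Qed.

Lemma first_good_sat t :
  let g := first_good (L + t) (prune_level t) in (g \in prune_level t) && ~~ bad (L + t) g.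
Proof. exact: bmin_sat (first_good_lt t). Qed.

Lemma prune_level_inv t :
  [/\ uniq (prune_level t), size (prune_level t) = n.+1
    & all (fun v => v < 2 ^ (L + t)) (prune_level t)].
Proof.
elim: t => [|t [U S A]].
  rewrite prune_level0 iota_uniq size_iota addn0; split => //.
  by apply/allP => v; rewrite mem_iota add0n ltnS => /leq_ltn_trans; apply; apply: label_len_gt.
rewrite prune_levelS /prune_step; case: ifP => Hd; last first.
  by split => //; apply/allP => v /(allP A); rewrite addnS expnS; lia.
have /andP[Hin _] := first_bad_sat Hd; have Hg := first_good_lt t.
set g := first_good _ _; set d := first_bad _ _.
have Hnew : g + 2 ^ (L + t) \notin rem d (prune_level t).
  by apply/negP => /mem_rem /(allP A); lia.
split; [by rewrite /= Hnew rem_uniq | by rewrite /= size_rem // S |].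
rewrite /= addnS expnS; apply/andP; split; first lia.
by apply/allP => v /mem_rem /(allP A); lia.
Qed.

Lemma prune_level_lt t v : v \in prune_level t -> v < 2 ^ (L + t).
Proof. by have [_ _ A] := prune_level_inv t; move/(allP A). Qed.

Lemma prune_level_label t v : v \in prune_level t -> v %% 2 ^ L <= n.
Proof.
elim: t v => [|t IH] v.
  by rewrite prune_level0 mem_iota add0n ltnS => H; rewrite modn_small // (leq_ltn_trans H (label_len_gt n)).
rewrite prune_levelS /prune_step; case: ifP => Hd; last exact: IH.
rewrite inE => /orP[/eqP ->|/mem_rem]; last exact: IH.
rewrite modn_add_exp2; apply: IH.
by have /andP[] := first_good_sat t.
Qed.

Lemma prune_level_parent t v : v \in prune_level t.+1 -> v %% 2 ^ (L + t) \in prune_level t.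
Proof.
rewrite prune_levelS /prune_step; case: ifP => Hd; last by move=> H; rewrite modn_small // prune_level_lt.
rewrite inE => /orP[/eqP ->|/mem_rem H]; last by rewrite modn_small // prune_level_lt.
by rewrite modnDr modn_small ?first_good_lt //; have /andP[] := first_good_sat t.
Qed.

Variables (R_lim : nat -> bool) (k1 : nat).
Hypothesis R_limit : forall k i, k1 <= k -> i <= n -> R k i = R_lim i.

Definition bad_count t := count (fun v => R_lim (v %% 2 ^ L)) (prune_level t).

Lemma bad_limit t v : k1 <= L + t -> v \in prune_level t -> bad (L + t) v = R_lim (v %% 2 ^ L).
Proof. by move=> Hk Hv; rewrite /bad R_limit // (prune_level_label Hv). Qed.

Lemma bad_count_step t : k1 <= L + t ->
  bad_count t.+1 = (bad_count t).-1 /\ (bad_count t = 0 -> prune_level t.+1 = prune_level t).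
Proof.
move=> Hk; rewrite /bad_count prune_levelS /prune_step; case: ifP => Hd.
  have /andP[Hin Hb] := first_bad_sat Hd; have /andP[Hgin Hgb] := first_good_sat t.
  rewrite (bad_limit Hk Hin) in Hb; rewrite (bad_limit Hk Hgin) in Hgb.
  have Hpos : 0 < count (fun v => R_lim (v %% 2 ^ L)) (prune_level t).
    by rewrite -has_count; apply/hasP; exists (first_bad (L + t) (prune_level t)).
  split; last by move=> E; rewrite E in Hpos.
  by rewrite /= count_rem Hin Hb /= subn1 modn_add_exp2 (negPf Hgb).
split => //; case E: (count _ _) => [//|c].
have /hasP [v Hv Hr] : has (fun v => R_lim (v %% 2 ^ L)) (prune_level t) by rewrite has_count E.
have := bmin_le_sat (P := fun v => (v \in prune_level t) && bad (L + t) v) _ (prune_level_lt Hv).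
rewrite Hv (bad_limit Hk Hv) Hr => /(_ isT) H.
by rewrite /first_bad (leq_ltn_trans H (prune_level_lt Hv)) in Hd.
Qed.

Lemma bad_count_le m : bad_count (k1 + m) <= n.+1 - m.
Proof.
elim: m => [|m IH].
  by have [_ S _] := prune_level_inv k1; rewrite addn0 subn0 /bad_count -S count_size.
have Hk : k1 <= L + (k1 + m) by lia.
by have [E _] := bad_count_step Hk; rewrite addnS E; lia.
Qed.

(** Each step kills a word with a label outside the limit set, so after at
    most [n+1] further steps none remain and the levels stop changing. *)
Lemma prune_level_stable : exists t0, forall t, t0 <= t ->
  prune_level t.+1 = prune_level t /\
  forall v, v \in prune_level t -> ~~ R_lim (v %% 2 ^ L).
Proof.
exists (k1 + n.+1) => t Ht.
have Hb : bad_count t = 0.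
  have := bad_count_le (t - k1); rewrite subnKC; last lia.
  by move=> H; apply/eqP; rewrite -leqn0 (leq_trans H) //; lia.
have Hk : k1 <= L + t by lia.
split; first by have [_ ->] := bad_count_step Hk.
move=> v Hv; apply/negP => Hr.
have : 0 < bad_count t by rewrite /bad_count -has_count; apply/hasP; exists v.
by rewrite Hb.
Qed.

End Pruning.

Lemma prune_level_ext n R1 R2 t : (forall k i, k < label_len n + t -> R1 k i = R2 k i) ->
  prune_level n R1 t = prune_level n R2 t.
Proof.
elim: t => [//|t IH] E; rewrite !prune_levelS IH => [|k i Hk]; last by apply: E; lia.
have Ebad v : bad n R1 (label_len n + t) v = bad n R2 (label_len n + t) v.
  by rewrite /bad E //; lia.
have Ed S : first_bad n R1 (label_len n + t) S = first_bad n R2 (label_len n + t) S.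
  by apply: eq_bmin => v; rewrite Ebad.
have Eg S : first_good n R1 (label_len n + t) S = first_good n R2 (label_len n + t) S.
  by apply: eq_bmin => v; rewrite Ebad.
by rewrite /prune_step Ed Eg.
Qed.

Definition modn_search v m := v - m * bmin (fun q => v < q.+1 * m) v.+1.

Lemma modn_searchE v m : modn_search v m = v %% m.
Proof.
rewrite /modn_search; case: (posnP m) => [->|Hm]; first by rewrite mul0n subn0 modn0.
rewrite (_ : bmin _ _ = v %/ m); first by rewrite {1}(divn_eq v m); nia.
apply: bminE; first exact: leq_trans (leq_div v m) _.
  by move=> _; rewrite ltn_ceil.
move=> j Hj; rewrite -leqNgt.
by apply: leq_trans (leq_divM v m); rewrite leq_mul2r Hj orbT.
Qed.

Lemma computable_modn a f g :
  computable a f -> computable a g -> computable a (fun xs => f xs %% g xs).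
Proof.
move=> Hf Hg.
suff : computable a (fun xs => modn_search (f xs) (g xs)).
  by apply: computable_ext => xs _; rewrite modn_searchE.
apply: computable_sub (Hf) (computable_mul (Hg) _).
apply: (computable_bmin (P := fun q xs => f xs < q.+1 * g xs)); last exact: computable_succ Hf.
apply: computable_ltn (computable_behead Hf) _.
exact: computable_mul (computable_succ (computable_proj a.+1 0 erefl)) (computable_behead Hg).
Qed.

Definition listed (p : baire) (k i : nat) : bool := has (fun j => p j == i.+1) (iota 0 k).

Lemma listed_stable p n : exists K, forall k i, K <= k -> i <= n -> listed p k i = listed p K i.
Proof.
have stable1 i : exists K, forall k, K <= k -> listed p k i = listed p K i.
  case: (excluded_middle_informative (exists j, p j = i.+1)) => [[j Hj]|Hnot].
    have Hl k : j < k -> listed p k i by move=> Hk; apply/hasP; exists j; rewrite ?mem_iota ?Hj.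
    by exists j.+1 => k Hk; rewrite !Hl.
  exists 0 => k _; apply/hasP => [[j _ /eqP Hj]]; apply: Hnot; by exists j.
elim: n => [|n [K IH]].
  have [K HK] := stable1 0; exists K => k i Hk; rewrite leqn0 => /eqP ->; exact: HK.
have [K' HK'] := stable1 n.+1; exists (maxn K K') => k i; rewrite geq_max => /andP[H1 H2].
rewrite leq_eqVlt => /orP[/eqP ->|Hi]; first by rewrite HK' // [RHS]HK' ?leq_maxr.
by rewrite IH // [RHS]IH ?leq_maxl.
Qed.

Definition listed_code k i s := bmin (fun j => code_nth j s == i.+1) k < k.

Lemma code_drop_prefix p l m : (code_drop l (code_seq (Defs.prefix p m)) == 0) = (m <= l).
Proof. by rewrite code_drop_seq code_seq_eq0 -size_eq0 size_drop size_mkseq subn_eq0. Qed.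

Lemma code_nth_prefix p j m : j < m -> code_nth j (code_seq (Defs.prefix p m)) = p j.
Proof. by move=> H; rewrite code_nth_seq ?size_mkseq // nth_mkseq. Qed.

Lemma listed_code_prefix p k i m :
  k <= m -> listed_code k i (code_seq (Defs.prefix p m)) = listed p k i.
Proof.
move=> Hk; rewrite /listed_code /bmin -{2}(size_iota 0 k) -has_find /listed.
apply: eq_in_has => j; rewrite mem_iota add0n => /andP[_ Hj].
by rewrite code_nth_prefix // (leq_trans Hj Hk).
Qed.

Lemma computable_listed_code a k i s :
  computable a k -> computable a i -> computable a s ->
  computable a (fun xs => listed_code (k xs) (i xs) (s xs)).
Proof.
move=> Hk Hi Hs; apply: computable_ltn (Hk).
apply: (computable_bmin (P := fun j xs => code_nth j (s xs) == (i xs).+1)) Hk.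
apply: computable_eqn (computable_succ (computable_behead Hi)).
exact: computable_code_nth (computable_proj a.+1 0 erefl) (computable_behead Hs).
Qed.

(** The state [cpair Ad Rm] (two coded sequences) stands for the level
    [({0..n} ++ Ad) \ Rm]. *)
Section CodedPruning.
Variables (n s : nat).
Local Notation L := (label_len n).

Definition state_mem v c :=
  ((v <= n) || code_mem v (unpair1 c)) && ~~ code_mem v (unpair2 c).
Definition bad_code k v := listed_code k (v %% 2 ^ L) s.
Definition first_bad_code k c := bmin (fun v => state_mem v c && bad_code k v) (2 ^ k).
Definition first_good_code k c := bmin (fun v => state_mem v c && ~~ bad_code k v) (2 ^ k).
Definition prune_step_code k c :=
  if first_bad_code k c < 2 ^ k then
    cpair (cpair (first_good_code k c + 2 ^ k) (unpair1 c)).+1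
          (cpair (first_bad_code k c) (unpair2 c)).+1
  else c.
Definition prune_state t := iteri t (fun i c => prune_step_code (L + i) c) (cpair 0 0).

Local Notation Rs := (fun k i => listed_code k i s).

Lemma prune_state_spec t : (forall t', t' <= t -> uniq (prune_level n Rs t')) ->
  exists Rm, (exists Ad, prune_state t = cpair (code_seq Ad) (code_seq Rm)) /\
    all (fun v => v < 2 ^ (L + t)) Rm /\
    forall v, state_mem v (prune_state t) = (v \in prune_level n Rs t).
Proof.
elim: t => [|t IH] HU.
  exists [::]; split; first by exists [::].
  split=> // v; rewrite /state_mem unpair1_cpair unpair2_cpair.
  by rewrite -[0]/(code_seq [::]) !code_mem_seq orbF andbT prune_level0 mem_iota.
have [Rm [[Ad E] [HRm Hin]]] := IH (fun t' Ht' => HU t' (leq_trans Ht' (leqnSn t))).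
set k := L + t.
have Ed : first_bad_code k (prune_state t) = first_bad n Rs k (prune_level n Rs t).
  by apply: eq_bmin => v; rewrite Hin.
have Eg : first_good_code k (prune_state t) = first_good n Rs k (prune_level n Rs t).
  by apply: eq_bmin => v; rewrite Hin.
rewrite /prune_state iteriS -/(prune_state t) prune_levelS /prune_step_code /prune_step.
rewrite -/k Ed Eg; case: ifP => Hd; last first.
  exists Rm; split; first by exists Ad.
  by split=> //; apply/allP => v /(allP HRm) /=; rewrite /k addnS expnS; lia.
set d := first_bad _ _ _ _; set g := first_good _ _ _ _.
exists (d :: Rm); split; first by exists (g + 2 ^ k :: Ad); rewrite E unpair1_cpair unpair2_cpair.
split.
  rewrite /= addnS expnS -/k; apply/andP; split; first lia.
  by apply/allP => v /(allP HRm) /=; rewrite /k; lia.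
move=> v; have := Hin v; rewrite E /state_mem !unpair1_cpair !unpair2_cpair.
rewrite -[(cpair (g + 2 ^ k) _).+1]/(code_seq (_ :: Ad)) -[(cpair d _).+1]/(code_seq (d :: Rm)).
rewrite !code_mem_seq !in_cons (mem_rem_uniq _ (HU t (leqnSn t))) inE => <-.
case: eqP => [->|Hne] /=; last first.
  by case: (v <= n); case: (v \in Ad); case: (v == d); case: (v \in Rm).
(* the new word [g + 2 ^ k] is not below [2 ^ k], unlike [d] and [Rm] *)
rewrite orbT /= negb_or; apply/andP; split.
  by apply/eqP => Eq; move: Hd; rewrite -/d -Eq; lia.
by apply/negP => /(allP HRm) /=; rewrite -/k; lia.
Qed.

End CodedPruning.

Lemma computable_state_mem n a v c : computable a v -> computable a c ->
  computable a (fun xs => state_mem n (v xs) (c xs)).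
Proof.
move=> Hv Hc; apply: computable_andb; last first.
  exact: computable_negb (computable_code_mem Hv (computable_unpair2 Hc)).
apply: computable_orb (computable_leq Hv (computable_const a n)) _.
exact: computable_code_mem Hv (computable_unpair1 Hc).
Qed.

Lemma computable_bad_code n a s k v : computable a s -> computable a k -> computable a v ->
  computable a (fun xs => bad_code n (s xs) (k xs) (v xs)).
Proof.
move=> Hs Hk Hv; apply: computable_listed_code (Hk) _ Hs.
exact: computable_modn Hv (computable_const a _).
Qed.

Section ComputableCodedPruning.
Variables (n a : nat) (s k c : seq nat -> nat).
Hypotheses (Hs : computable a s) (Hk : computable a k) (Hc : computable a c).

Lemma computable_first_bad_code :
  computable a (fun xs => first_bad_code n (s xs) (k xs) (c xs)).
Proof.
apply: (computable_bmin (P := fun v xs => state_mem n v (c xs) && bad_code n (s xs) (k xs) v));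
  last exact: computable_exp2 Hk.
have Hv := computable_proj a.+1 0 erefl.
exact: computable_andb (computable_state_mem n Hv (computable_behead Hc))
  (computable_bad_code n (computable_behead Hs) (computable_behead Hk) Hv).
Qed.

Lemma computable_first_good_code :
  computable a (fun xs => first_good_code n (s xs) (k xs) (c xs)).
Proof.
apply: (computable_bmin (P := fun v xs => state_mem n v (c xs) && ~~ bad_code n (s xs) (k xs) v));
  last exact: computable_exp2 Hk.
have Hv := computable_proj a.+1 0 erefl.
exact: computable_andb (computable_state_mem n Hv (computable_behead Hc))
  (computable_negb (computable_bad_code n (computable_behead Hs) (computable_behead Hk) Hv)).
Qed.

Lemma computable_prune_step_code :
  computable a (fun xs => prune_step_code n (s xs) (k xs) (c xs)).
Proof.
apply: computable_if (Hc).
  exact: computable_ltn computable_first_bad_code (computable_exp2 Hk).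
apply: computable_cpair; apply: computable_succ; apply: computable_cpair.
- exact: computable_add computable_first_good_code (computable_exp2 Hk).
- exact: computable_unpair1 Hc.
- exact: computable_first_bad_code.
- exact: computable_unpair2 Hc.
Qed.
End ComputableCodedPruning.

Lemma computable_prune_state n a s t : computable a s -> computable a t ->
  computable a (fun xs => prune_state n (s xs) (t xs)).
Proof.
move=> Hs Ht.
apply: (computable_iteri (g := fun i c xs => prune_step_code n (s xs) (label_len n + i) c))
  Ht (computable_const a _) _.
have Hs2 : computable a.+2 (fun xs => s (drop 2 xs)).
  apply: computable_ext (computable_behead (computable_behead Hs)) => xs _.
  by case: xs => [|? [|? ?]] //=; rewrite drop0.
apply: computable_prune_step_code Hs2 _ (computable_proj a.+2 1 erefl).
exact: computable_add (computable_const a.+2 _) (computable_proj a.+2 0 erefl).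
Qed.

Lemma t2comp_query P F p (N val : nat -> nat) :
  (forall z, evalR P [:: z] (F z)) ->
  (forall c m, F (cpair c (code_seq (Defs.prefix p m))) = if m <= N c then 0 else (val c).+1) ->
  t2comp P p val.
Proof.
move=> HP HF c; exists (N c).+1; split.
  by have := HP (cpair c (code_seq (Defs.prefix p (N c).+1))); rewrite HF ltnn.
by move=> j Hj; have := HP (cpair c (code_seq (Defs.prefix p j))); rewrite HF -ltnS Hj.
Qed.

(** The name of the tree: bit [c] of it is decided once the word coded by [c]
    is known, i.e. after [wcode_size c] digits of the enumeration. *)
Definition tree_query n z :=
  let c := unpair1 z in let s := unpair2 z in
  if code_drop (wcode_size c) s == 0 then 0
  else ((wcode_size c < label_len n)
        || state_mem n (wcode_val c) (prune_state n s (wcode_size c - label_len n))).+1.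

Lemma computable_tree_query n : computable 1 (fun xs => tree_query n (nth 0 xs 0)).
Proof.
have Hc := computable_unpair1 (computable_proj 1 0 erefl).
have Hs := computable_unpair2 (computable_proj 1 0 erefl).
have Hl := computable_wcode_size Hc.
apply: computable_if (computable_const 1 0) _.
  exact: computable_eqn (computable_code_drop Hl Hs) (computable_const 1 0).
apply/computable_succ/computable_orb; first exact: computable_ltn Hl (computable_const 1 _).
have Ht := computable_sub Hl (computable_const 1 (label_len n)).
by have := computable_state_mem n (computable_wcode_val Hc) (computable_prune_state n Hs Ht).
Qed.

Definition label_query L z :=
  let s := unpair2 z in
  if code_drop L s == 0 then 0
  else (iteri L (fun j r => r + code_nth j s * 2 ^ j) 0).+1.

Lemma computable_label_query L : computable 1 (fun xs => label_query L (nth 0 xs 0)).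
Proof.
have Hs := computable_unpair2 (computable_proj 1 0 erefl).
apply: computable_if (computable_const 1 0) _.
  exact: computable_eqn (computable_code_drop (computable_const 1 L) Hs) (computable_const 1 0).
apply: computable_succ.
apply: (computable_iteri (g := fun j r xs => r + code_nth j (unpair2 (nth 0 xs 0)) * 2 ^ j))
  (computable_const 1 L) (computable_const 1 0) _.
apply: computable_add (computable_proj 3 1 erefl) _.
apply: computable_mul _ (computable_exp2 (computable_proj 3 0 erefl)).
apply: computable_code_nth (computable_proj 3 0 erefl) _.
apply: computable_ext (computable_unpair2 (computable_proj 3 2 erefl)) => xs _.
by rewrite nth_drop.
Qed.

Lemma label_query_prefix L p c m : label_query L (cpair c (code_seq (Defs.prefix p m))) =
  if m <= L then 0 else (\sum_(j < L) p j * 2 ^ j).+1.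
Proof.
rewrite /label_query unpair2_cpair code_drop_prefix; case: ifP => // HL; congr S.
have : L <= L by [].
elim: {-2}L => [|l IH] Hl; first by rewrite big_ord0.
by rewrite iteriS IH ?(ltnW Hl) // big_ord_recr /= code_nth_prefix //; lia.
Qed.

Section EnumTree.
Variables (n : nat) (p : baire) (i0 : nat).
Hypotheses (i0_le : i0 <= n) (i0_unlisted : forall k, listed p k i0 = false).
Local Notation L := (label_len n).

Definition enum_level k := prune_level n (listed p) (k - L).
Local Notation enum_tree := (level_tree L enum_level).

Lemma tree_query_prefix c m : tree_query n (cpair c (code_seq (Defs.prefix p m))) =
  if m <= wcode_size c then 0 else (enum_tree c).+1.
Proof.
rewrite /tree_query unpair1_cpair unpair2_cpair code_drop_prefix; case: ifP => // Hm.
congr S; rewrite /level_tree /in_levels /wdecode size_val_word val_word_modn.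
rewrite modn_small ?wcode_val_lt //; case: ltnP => //= HL.
set t := wcode_size c - L; set s := code_seq _.
have Eq t' : t' <= t -> prune_level n (fun k i => listed_code k i s) t' = prune_level n (listed p) t'.
  move=> Ht'; apply: prune_level_ext => k i Hk; rewrite listed_code_prefix //.
  by move: Hm; rewrite /t in Ht'; lia.
have Huniq t' : t' <= t -> uniq (prune_level n (fun k i => listed_code k i s) t').
  by move=> Ht'; rewrite Eq //; have [] := prune_level_inv i0_le i0_unlisted t'.
have [Rm [_ [_ ->]]] := prune_state_spec Huniq.
by rewrite Eq.
Qed.

Lemma enum_tree_sharp : is_tree enum_tree /\ tree_sharp n.+1 enum_tree.
Proof.
have [K HK] := listed_stable p n.
have [t0 Ht0] := prune_level_stable i0_le i0_unlisted HK.
have Hinv := prune_level_inv i0_le i0_unlisted.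
apply: level_tree_sharp; [exact: label_len_gt | exact: label_len_min | | | ].
- move=> k Hk; have [U S A] := Hinv (k - L); rewrite /enum_level; split => //.
  by rewrite subnKC in A.
- move=> k v Hk; rewrite /enum_level subSn // => /(prune_level_parent i0_le i0_unlisted).
  by rewrite subnKC.
- exists (L + t0) => k v Hk HL; rewrite /enum_level subSn //.
  have [-> _] := Ht0 (k - L) ltac:(lia).
  move=> Hv; rewrite Hv.
  have [_ _ A] := Hinv (k - L); rewrite subnKC // in A.
  by apply/negP => /(allP A) /=; lia.
Qed.

Lemma enum_tree_has_path : exists x, forall k, inT enum_tree (bprefix x k).
Proof.
exists (wcat (val_word L i0) (fun _ => false)) => k.
rewrite inT_level_tree /in_levels size_bprefix; case: ltnP => //= Hk.
have Hzero j : word_val (bprefix (fun _ => false) j) = 0 by rewrite word_val_bprefix big1.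
rewrite bprefix_wcat size_val_word // word_val_cat Hzero val_word_modn addn0.
rewrite modn_small ?(leq_ltn_trans i0_le (label_len_gt n)) //.
exact: mem_prune_level_i0.
Qed.
(** Once the levels are stable, no surviving label is ever enumerated. *)
Lemma enum_tree_label x : (forall k, inT enum_tree (bprefix x k)) ->
  word_val (bprefix x L) <= n /\ forall j, p j <> (word_val (bprefix x L)).+1.
Proof.
move=> Hx; have [K HK] := listed_stable p n.
have [t0 Ht0] := prune_level_stable i0_le i0_unlisted HK.
have := Hx (L + t0); rewrite inT_level_tree /in_levels size_bprefix ltnNge leq_addr orFb.
rewrite /enum_level addKn => Hin.
have [_ /(_ _ Hin) Hgood] := Ht0 t0 (leqnn t0).
have := prune_level_label i0_le i0_unlisted Hin.
rewrite word_val_bprefix_modn ?leq_addr // in Hgood * => Hle.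
split=> // j Hj; move: Hgood; rewrite -(HK (maxn K j.+1)) ?leq_maxl //.
by apply/negP/negPn/hasP; exists j; rewrite ?Hj // mem_iota add0n leq_maxr.
Qed.

End EnumTree.

Theorem C_fin_sW_le_C_sharp n : sW_le (C_fin n) (C_sharp n.+1).
Proof.
have [PH HPH] := computable_tree_query n.
have [PK HPK] := computable_label_query (label_len n).
exists PK, PH => D G HG p A HpA HAne.
have [i Hi] := set0Pn _ HAne.
have i_le : nat_of_ord i <= n by rewrite -ltnS ltn_ord.
have i_unlisted k : listed p k i = false.
  by apply/hasP => [[j _ /eqP Ej]]; apply: (proj1 (HpA i) Hi j Ej).
set T := level_tree (label_len n) (enum_level n p).
have HT : t2comp PH p T.
  apply: (t2comp_query (F := tree_query n) (N := wcode_size)) => [z|c m].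
    exact: HPH [:: z] erefl.
  exact: tree_query_prefix i_le i_unlisted c m.
set B := fun x => forall k, inT T (bprefix x k).
have HB : delta (closed_sharp n.+1) T B by have [] := enum_tree_sharp i_le i_unlisted.
have [HD [x [Hx Bx]]] := HG T B HB (enum_tree_has_path i_le i_unlisted).
have [lab_le lab_ok] := enum_tree_label i_le i_unlisted Bx.
have HK : t2comp PK (G T) (fun _ => word_val (bprefix x (label_len n))).
  apply: (t2comp_query (F := label_query (label_len n)) (N := fun _ => label_len n)) => [z|c m].
    exact: HPK [:: z] erefl.
  rewrite label_query_prefix word_val_bprefix; case: ifP => // _; congr S.
  by apply: eq_bigr => j _; rewrite Hx.
have lab_lt : word_val (bprefix x (label_len n)) < n.+1 by rewrite ltnS.
exists T; do 2!split=> //; exists (fun _ => word_val (bprefix x (label_len n))).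
split=> //; exists (Ordinal lab_lt); split=> //.
by apply/HpA => k; apply: lab_ok.
Qed.

Theorem proposition25 : forall n : nat, sW_lt (C_fin n) (C_sharp n.+1).
Proof. by move=> n; split; [apply: C_fin_sW_le_C_sharp | apply: C_sharp_not_sW_le_C_fin]. Qed.
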